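(* Let $G$ be a finite connected graph with a real structure and let $D$ be a real divisor on $G$. Then $\operatorname{rk}_{\mathbb R}(D)\ge \operatorname{rk}(D)$.
   Context: A finite graph $G$ has vertex set $V(G)$, edge set $E(G)$ and incidence function $\psi$ assigning to each edge a set of one or two vertices (loops and multiple edges allowed). A real structure on $G$ is a pair of involutions of $V(G)$ and $E(G)$, written $v\mapsto\overline v$, $e\mapsto\overline e$, with $\psi(\overline e)=\overline{\psi(e)}$. A divisor is an element $D=\sum_{v}D(v)v$ of the free abelian group $\operatorname{Div}(G)$ on $V(G)$; $D\ge0$ means all $D(v)\ge0$; $\deg D=\sum_v D(v)$. For $f:V(G)\to\mathbb Z$, the principal divisor $\Delta(f)$ is given by $\Delta(f)(v)=\sum_{e\in E(G),\,\psi(e)=\{v,w\}}(f(w)-f(v))$. $D_1\sim D_2$ iff $D_2-D_1=\Delta(f)$ for some $f$. $|D|=\{D'\ge0: D'\sim D\}$. The rank $\operatorname{rk}(D)$ is $-1$ if $|D|=\emptyset$, and otherwise the maximal integer $r$ such that for every effective $E$ of degree $r$ there is $D'\in|D|$ with $D'-E\ge0$. The conjugate divisor is $\overline D(v)=D(\overline v)$; $D$ is real if $\overline D=D$. The real rank $\operatorname{rk}_{\mathbb R}(D)$ of a real divisor $D$ is the maximal integer $r$ such that for every real effective divisor $E$ of degree $r$ there is a real divisor $D'\in|D|$ with $D'-E\ge0$ (with value $-1$ if no such $r\ge0$ exists). *)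

From mathcomp Require Import all_boot all_order all_algebra.
From Stdlib Require Import ClassicalEpsilon.
Set Implicit Arguments. Unset Strict Implicit. Unset Printing Implicit Defensive.
Import Order.TTheory GRing.Theory Num.Theory.
Local Open Scope ring_scope.

Section GraphDivisors.
Variables (V E : finType) (psi : E -> {set V}).
(* psi e is the set of one or two endpoints of the edge e (loops and
   multiple edges allowed). *)

Definition incidence_ok := forall e, (0 < #|psi e| <= 2)%N.

Definition adj : rel V := fun u v => [exists e, (u \in psi e) && (v \in psi e)].
Definition connected_graph := #|V| != 0%N /\ forall u v, connect adj u v.

Definition divisor := V -> int.
Definition effective (D : divisor) := forall v, 0 <= D v.
Definition deg (D : divisor) : int := \sum_(v : V) D v.

(* Delta(f)(v) = sum over edges e with psi e = {v, w} of (f w - f v);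
   for a loop psi e :\ v is empty, contributing 0. *)
Definition principal (f : V -> int) : divisor :=
  fun v => \sum_(e : E | v \in psi e) \sum_(w in psi e :\ v) (f w - f v).

Definition lin_equiv (D1 D2 : divisor) :=
  exists f : V -> int, forall v, D2 v - D1 v = principal f v.

Definition in_linsys (D D' : divisor) := effective D' /\ lin_equiv D D'.

Definition rank_cond (D : divisor) (r : nat) :=
  forall Ed : divisor, effective Ed -> deg Ed <= r%:Z ->
    exists D', in_linsys D D' /\ effective (fun v => D' v - Ed v).

Variable cV : V -> V.
Definition conj_div (D : divisor) : divisor := fun v => D (cV v).
Definition real_div (D : divisor) := forall v, conj_div D v = D v.

Definition real_rank_cond (D : divisor) (r : nat) :=
  forall Ed : divisor, effective Ed -> real_div Ed -> deg Ed <= r%:Z ->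
    exists D', real_div D' /\ in_linsys D D' /\ effective (fun v => D' v - Ed v).

End GraphDivisors.

Definition max_index (P : nat -> Prop) : int :=
  match excluded_middle_informative
          (exists n, P n /\ forall m, P m -> (m <= n)%N) with
  | left H => Posz (proj1_sig (constructive_indefinite_description _ H))
  | right _ => -1
  end.

Definition rank (V E : finType) (psi : E -> {set V}) (D : divisor V) : int :=
  max_index (rank_cond psi D).

Definition real_rank (V E : finType) (psi : E -> {set V}) (cV : V -> V)
  (D : divisor V) : int :=
  max_index (real_rank_cond psi cV D).

(* Suppose [D' = D + Delta(f)] is effective and dominates a real effective
   [E]. The symmetrised potential [h = max(f, f o c)] makes [D + Delta(h)]
   real, and it still dominates [E]: where [h v = f v], the function [h]
   dominates [f] and agrees with it at [v], so [Delta(h)(v) >= Delta(f)(v)];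
   where [h v = f (c v)], the same comparison with [f o c] gives
   [Delta(h)(v) >= Delta(f)(c v)], and [D], [E] are real. So every rank
   condition met by [D] is a real rank condition met by [D]. The real rank
   conditions are bounded, as [k (v0 + c v0)] with [k > |deg D|] cannot be
   dominated by a divisor of degree [deg D]; this makes the maxima comparable. *)

From mathcomp Require Import all_boot all_order all_algebra.
From Stdlib Require Import ClassicalEpsilon.
Set Implicit Arguments. Unset Strict Implicit. Unset Printing Implicit Defensive.
Import Order.TTheory GRing.Theory Num.Theory.
Local Open Scope ring_scope.

Lemma sum_pairs_diff_eq0 (T : finType) (A : {set T}) (f : T -> int) :
  \sum_(v in A) \sum_(w in A :\ v) (f w - f v) = 0.
Proof.
have swap (F : T -> T -> int) :
    \sum_(v in A) \sum_(w in A :\ v) F v w = \sum_(w in A) \sum_(v in A :\ w) F v w.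
  rewrite (exchange_big_dep (fun w => w \in A)) => [|v w _]; last by case/setD1P.
  apply: eq_bigr => w Aw; apply: eq_bigl => v.
  by rewrite !inE Aw andbT eq_sym andbC.
under eq_bigr do rewrite sumrB.
by rewrite sumrB swap subrr.
Qed.

Section PrincipalDivisors.
Variables (V E : finType) (psi : E -> {set V}).

Lemma eq_principal (f g : V -> int) : f =1 g -> principal psi f =1 principal psi g.
Proof.
by move=> fg v; apply: eq_bigr => e _; apply: eq_bigr => w _; rewrite !fg.
Qed.

Lemma ler_principal (f g : V -> int) v :
  (forall w, f w <= g w) -> g v = f v -> principal psi f v <= principal psi g v.
Proof.
move=> le_fg gv; apply: ler_sum => e _; apply: ler_sum => w _.
by rewrite gv lerB.
Qed.

Lemma deg_principal (f : V -> int) : deg (principal psi f) = 0.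
Proof.
rewrite /deg /principal (exchange_big_dep predT) //=.
by apply: big1 => e _; apply: sum_pairs_diff_eq0.
Qed.

Lemma lin_equivE (D D' : divisor V) (f : V -> int) :
  (forall v, D' v - D v = principal psi f v) ->
  forall v, D' v = D v + principal psi f v.
Proof. by move=> Hf v; rewrite -Hf addrC subrK. Qed.

Lemma deg_lin_equiv (D D' : divisor V) : lin_equiv psi D D' -> deg D' = deg D.
Proof.
case=> f /lin_equivE Hf.
rewrite /deg (eq_bigr _ (fun v _ => Hf v)) big_split /=.
by have := deg_principal f; rewrite /deg => ->; rewrite addr0.
Qed.

Lemma deg_le_dominating (Ed D' : divisor V) :
  effective (fun v => D' v - Ed v) -> deg Ed <= deg D'.
Proof. by move=> dom; apply: ler_sum => v _; rewrite -subr_ge0; apply: dom. Qed.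

End PrincipalDivisors.

Section RealStructure.
Variables (V E : finType) (psi : E -> {set V}) (cV : V -> V) (cE : E -> E).
Hypotheses (HcV : involutive cV) (HcE : involutive cE)
  (Hcompat : forall e, psi (cE e) = cV @: psi e).

Lemma principal_conj (f : V -> int) v :
  principal psi f (cV v) = principal psi (f \o cV) v.
Proof.
rewrite /principal (reindex_inj (inv_inj HcE)) /=.
apply: eq_big => [e|e _]; first by rewrite Hcompat mem_imset //; exact: inv_inj.
rewrite (reindex_inj (inv_inj HcV)) /=.
apply: eq_big => [w|w _] //.
by rewrite !inE Hcompat mem_imset ?(inj_eq (inv_inj HcV)) //; exact: inv_inj.
Qed.

Lemma real_rank_cond_of_rank_cond (D : divisor V) r :
  real_div cV D -> rank_cond psi D r -> real_rank_cond psi cV D r.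
Proof.
move=> realD rankD Ed effE realE degE.
have [D' [[_ [f /lin_equivE Hf]] domD']] := rankD Ed effE degE.
pose h x := Num.max (f x) (f (cV x)).
have h_conj : h \o cV =1 h by move=> x; rewrite /h /= HcV maxC.
pose D'' v := D v + principal psi h v.
have domD'' v : 0 <= D'' v - Ed v.
  case: (leP (f (cV v)) (f v)) => [le_fcf|lt_ffc].
  - apply: le_trans (domD' v) _; rewrite Hf lerB // lerD //.
    apply: ler_principal => [w|]; first by rewrite /h le_max lexx.
    by rewrite /h max_l.
  - apply: le_trans (domD' (cV v)) _.
    rewrite Hf -[D (cV v)]/(conj_div cV D v) realD.
    rewrite -[Ed (cV v)]/(conj_div cV Ed v) realE principal_conj lerB // lerD //.
    apply: ler_principal => [w|]; first by rewrite /h le_max lexx orbT.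
    by rewrite /h /= max_r ?ltW.
exists D''; split; [|split; [split|]] => //.
- move=> v; rewrite /conj_div /D'' -[D (cV v)]/(conj_div cV D v) realD.
  by rewrite principal_conj (eq_principal psi h_conj).
- by move=> v; apply: le_trans (domD'' v) _; rewrite lerBlDr lerDl effE.
- by exists h => v; rewrite /D'' addrC addKr.
Qed.

Lemma real_rank_cond_bounded (D : divisor V) (v0 : V) n :
  real_rank_cond psi cV D n -> (n < (`|deg D|%N).+1 * 2)%N.
Proof.
move=> realrankD; rewrite ltnNge; apply/negP => le_kn.
set k := (`|deg D|%N).+1 in le_kn.
pose Ed : divisor V := fun u => k%:Z * ((u == v0)%:R + (u == cV v0)%:R).
have effE : effective Ed by move=> u; rewrite /Ed mulr_ge0 // addr_ge0.
have realE : real_div cV Ed.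
  move=> u; rewrite /conj_div /Ed (canF_eq HcV) (inj_eq (inv_inj HcV)).
  by rewrite addrC.
have sum_indicator a : \sum_u ((u == a)%:R : int) = 1.
  by rewrite (bigD1 a) //= eqxx big1 ?addr0 // => u /negbTE ->.
have degE : deg Ed = (k * 2)%N.
  by rewrite /deg -mulr_sumr big_split /= !sum_indicator PoszM.
have [D' [_ [[_ /deg_lin_equiv degD'] /deg_le_dominating]]] :=
  realrankD Ed effE realE ltac:(by rewrite degE lez_nat).
rewrite degD' degE; apply/negP; rewrite -ltNge.
apply: le_lt_trans (ler_norm (deg D)) _.
by rewrite -abszE ltz_nat muln2 -addnn ltn_addr.
Qed.

End RealStructure.

Lemma max_index_ge (P : nat -> Prop) (B n : nat) :
  (forall m, P m -> (m <= B)%N) -> P n -> n%:Z <= max_index P.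
Proof.
move=> boundP Pn; rewrite /max_index; case: excluded_middle_informative => [hasMax|noMax].
  by case: constructive_indefinite_description => m /= [_ maxm]; rewrite lez_nat maxm.
exfalso; apply: noMax.
pose p k := is_left (excluded_middle_informative (P k)).
have pP k : p k <-> P k by rewrite /p; case: excluded_middle_informative.
have [m /pP Pm maxm] := @ex_maxnP p B (ex_intro _ n (proj2 (pP n) Pn))
  (fun k pk => boundP k (proj1 (pP k) pk)).
by exists m; split => // k /pP; apply: maxm.
Qed.

Lemma max_index_ge_N1 (P : nat -> Prop) : -1 <= max_index P.
Proof. by rewrite /max_index; case: excluded_middle_informative. Qed.

Lemma max_index_le (P Q : nat -> Prop) (B : nat) :
  (forall n, P n -> Q n) -> (forall n, Q n -> (n <= B)%N) ->
  max_index P <= max_index Q.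
Proof.
move=> PQ boundQ; rewrite [max_index P]/max_index.
case: excluded_middle_informative => [hasMax|_]; last exact: max_index_ge_N1.
by case: constructive_indefinite_description => n /= [/PQ Qn _]; exact: max_index_ge boundQ Qn.
Qed.

Theorem proposition1 (V E : finType) (psi : E -> {set V})
  (cV : V -> V) (cE : E -> E)
  (Hinc : incidence_ok psi)
  (HcV : involutive cV) (HcE : involutive cE)
  (Hcompat : forall e, psi (cE e) = cV @: psi e)
  (Hconn : connected_graph psi)
  (D : divisor V) (HD : real_div cV D) :
  rank psi D <= real_rank psi cV D.
Proof.
(* Connectedness is only needed for a vertex to exist. *)
case: Hconn; rewrite -lt0n => /card_gt0P[v0 _] _.
apply: (@max_index_le _ _ ((`|deg D|%N).+1 * 2)).
  by move=> n; apply: (real_rank_cond_of_rank_cond HcV HcE Hcompat HD).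
by move=> n /(real_rank_cond_bounded HcV v0) /ltnW.
Qed.
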